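(* The full subcategory $\mathbf{T_D Top_S}$ of $\mathbf{Top_S}$ consisting of $T_D$-spaces is equivalent to the opposite of the full subcategory $\mathbf{STDMT_P}$ of $\mathbf{MT_P}$ consisting of spatial $T_D$-algebras.
   Context: A space is $T_D$ if every point $x$ is locally closed ($\{x\}$ is closed in some open neighborhood of $x$). Soberification: $sX=\mathrm{pt}\,\Omega X$ (completely prime filters of the frame of opens), $\lambda_X(x)=\{U\text{ open}: x\in U\}$. A sober map $f:X\rightsquigarrow Y$ is a continuous map $X\to sY$; composition $g\bullet f=\lambda_{sZ}^{-1}\circ sg\circ f$, identities $\lambda_X$; this is $\mathbf{Top_S}$. An MT-algebra is a complete boolean algebra $M$ with $\square$ satisfying $\square1=1$, $\square(a\wedge b)=\square a\wedge\square b$, $\square a\le a$, $\square a\le\square\square a$; $\Diamond=\neg\square\neg$; open: $\square a=a$; locally closed: $a=\square b\wedge\Diamond c$; $M$ is $T_D$ if every element is a join of locally closed elements; $M$ is spatial if $a\mapsto\{x\text{ atom}: x\le a\}$ is injective. A proximity morphism $f:M\to N$ is a map with (P1) $f|_{\mathcal O M}:\mathcal O M\to\mathcal O N$ a frame morphism; (P2) $f(a\wedge b)=f(a)\wedge f(b)$; (P3) $f(\bigvee S)=\bigvee f[S]$ for finite $S\subseteq\mathcal{LC}M$; (P4) $f(a)=\bigvee\{f(x):x\in\mathcal{LC}M,x\le a\}$. $\mathbf{MT_P}$: MT-algebras with proximity morphisms, composition $(g\star f)(a)=\bigvee\{g(f(x)):x\in\mathcal{LC}M_1,x\le a\}$,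 identities $1_M(a)=\bigvee\{x\in\mathcal{LC}M:x\le a\}$. *)

From Stdlib Require Import List.




(* Morphisms are "raw" data together with a validity predicate; only   *)
(* valid raw morphisms are morphisms of the category.                  *)

Record CatData := {
  Ob : Type;
  Hm : Ob -> Ob -> Type;
  valid : forall a b, Hm a b -> Prop;
  cmp : forall a b c, Hm b c -> Hm a b -> Hm a c;   (* cmp g f = g after f *)
  idm : forall a, Hm a a
}.

Arguments valid {_ _ _} _.
Arguments cmp {_ _ _ _} _ _.
Arguments idm {_} _.

Definition opCat (C : CatData) : CatData := {|
  Ob := Ob C;
  Hm := fun a b => @Hm C b a;
  valid := fun a b f => @valid C b a f;
  cmp := fun x y z g f => @cmp C z y x f g;
  idm := fun a => @idm C a
|}.

Record Functor (C D : CatData) := {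
  Fo : Ob C -> Ob D;
  Fh : forall a b, Hm C a b -> Hm D (Fo a) (Fo b);
  F_valid : forall a b (f : Hm C a b), valid f -> valid (Fh a b f);
  F_id : forall a, Fh a a (idm a) = idm (Fo a);
  F_comp : forall a b c (f : Hm C a b) (g : Hm C b c),
      valid f -> valid g -> Fh a c (cmp g f) = cmp (Fh b c g) (Fh a b f)
}.

Arguments Fo {C D}.
Arguments Fh {C D} _ {a b} _.

Set Implicit Arguments.
Unset Strict Implicit.

Definition natiso (C D : CatData)
  (Fo1 : Ob C -> Ob D) (Fh1 : forall a b, Hm C a b -> Hm D (Fo1 a) (Fo1 b))
  (Fo2 : Ob C -> Ob D) (Fh2 : forall a b, Hm C a b -> Hm D (Fo2 a) (Fo2 b)) : Prop :=
  exists (al : forall a, Hm D (Fo1 a) (Fo2 a)) (be : forall a, Hm D (Fo2 a) (Fo1 a)),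
    (forall a, valid (al a) /\ valid (be a) /\
               cmp (be a) (al a) = idm (Fo1 a) /\ cmp (al a) (be a) = idm (Fo2 a)) /\
    (forall a b (f : Hm C a b), valid f ->
               cmp (Fh2 a b f) (al a) = cmp (al b) (Fh1 a b f)).

Arguments natiso {C D} _ _ _ _.

Definition CatEquivalent (C D : CatData) : Prop :=
  exists (F : Functor C D) (G : Functor D C),
    natiso (fun a => Fo G (Fo F a)) (fun a b f => Fh G (Fh F f))
           (fun a => a) (fun a b f => f) /\
    natiso (fun a => Fo F (Fo G a)) (fun a b f => Fh F (Fh G f))
           (fun a => a) (fun a b f => f).

Record Space := {
  pts :> Type;
  isOpen : (pts -> Prop) -> Prop;
  open_full : isOpen (fun _ => True);
  open_meet : forall U V, isOpen U -> isOpen V -> isOpen (fun x => U x /\ V x);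
  open_union : forall F : (pts -> Prop) -> Prop,
      (forall U, F U -> isOpen U) -> isOpen (fun x => exists U, F U /\ U x)
}.

Arguments isOpen {s}.

(* x is locally closed: {x} is closed in some open neighbourhood U of x,
   i.e. U \ {x} is open in the subspace U. *)
Definition TD_space (X : Space) : Prop :=
  forall x : X, exists U, isOpen U /\ U x /\
    exists V, isOpen V /\ forall y, U y -> (V y <-> y <> x).

(* completely prime filters of the frame of opens of X (points of sX) *)
Definition cpfilter (X : Space) (P : (X -> Prop) -> Prop) : Prop :=
  (forall U, P U -> isOpen U) /\
  P (fun _ => True) /\
  (forall U V, isOpen U -> isOpen V -> P U -> (forall x, U x -> V x) -> P V) /\
  (forall U V, P U -> P V -> P (fun x => U x /\ V x)) /\
  (forall F : (X -> Prop) -> Prop, (forall U, F U -> isOpen U) ->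
      P (fun x => exists U, F U /\ U x) -> exists U, F U /\ P U).

(* raw sober map X ~> Y : a function X -> sY *)
Definition rawSober (X Y : Space) := X -> ((Y -> Prop) -> Prop).

(* the open sets of sY are exactly the sets {P | P V}, V open in Y; so a
   map f : X -> sY is continuous iff {x | f x V} is open for V open. *)
Definition soberMap (X Y : Space) (f : rawSober X Y) : Prop :=
  (forall x, cpfilter (f x)) /\
  (forall V, isOpen V -> isOpen (fun x => f x V)).

Definition lambdaS (X : Space) : rawSober X X := fun x U => isOpen U /\ U x.

(* g . f = lambda_{sZ}^{-1} o sg o f, unfolded:
   (g . f)(x) = { W | f x (g^{-1}(phi W)) } with phi W = {Q | Q W} *)
Definition soberComp (X Y Z : Space) (g : rawSober Y Z) (f : rawSober X Y)
  : rawSober X Z := fun x W => f x (fun y => g y W).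

Definition TDTopS : CatData := {|
  Ob := { X : Space | TD_space X };
  Hm := fun X Y => rawSober (proj1_sig X) (proj1_sig Y);
  valid := fun X Y f => @soberMap (proj1_sig X) (proj1_sig Y) f;
  cmp := fun X Y Z g f => @soberComp (proj1_sig X) (proj1_sig Y) (proj1_sig Z) g f;
  idm := fun X => @lambdaS (proj1_sig X)
|}.

Record MTAlg := {
  mcar :> Type;
  mle : mcar -> mcar -> Prop;
  mle_refl : forall a, mle a a;
  mle_trans : forall a b c, mle a b -> mle b c -> mle a c;
  mle_anti : forall a b, mle a b -> mle b a -> a = b;
  msup : (mcar -> Prop) -> mcar;
  msup_ub : forall S a, S a -> mle a (msup S);
  msup_least : forall S b, (forall a, S a -> mle a b) -> mle (msup S) b;
  mmeet : mcar -> mcar -> mcar;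
  mmeet_l : forall a b, mle (mmeet a b) a;
  mmeet_r : forall a b, mle (mmeet a b) b;
  mmeet_glb : forall a b c, mle c a -> mle c b -> mle c (mmeet a b);
  mdistr : forall a b c,
      mmeet a (msup (fun x => x = b \/ x = c)) =
      msup (fun x => x = mmeet a b \/ x = mmeet a c);
  mneg : mcar -> mcar;
  mneg_meet : forall a, mmeet a (mneg a) = msup (fun _ => False);
  mneg_join : forall a, msup (fun x => x = a \/ x = mneg a) = msup (fun _ => True);
  mbox : mcar -> mcar;
  mbox_top : mbox (msup (fun _ => True)) = msup (fun _ => True);
  mbox_meet : forall a b, mbox (mmeet a b) = mmeet (mbox a) (mbox b);
  mbox_defl : forall a, mle (mbox a) a;
  mbox_4 : forall a, mle (mbox a) (mbox (mbox a))
}.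

Arguments mle {m}.
Arguments msup {m}.
Arguments mmeet {m}.
Arguments mneg {m}.
Arguments mbox {m}.

Definition mtop (M : MTAlg) : M := msup (fun _ => True).
Definition mbot (M : MTAlg) : M := msup (fun _ => False).
Definition mdia (M : MTAlg) (a : M) : M := mneg (mbox (mneg a)).
Definition openM (M : MTAlg) (a : M) : Prop := mbox a = a.
Definition locClosed (M : MTAlg) (a : M) : Prop :=
  exists b c, a = mmeet (mbox b) (mdia c).

Definition TD_alg (M : MTAlg) : Prop :=
  forall a : M, exists S : M -> Prop, (forall x, S x -> locClosed x) /\ a = msup S.

Definition atom (M : MTAlg) (x : M) : Prop :=
  x <> mbot M /\ forall y, mle y x -> y = mbot M \/ y = x.

Definition spatial (M : MTAlg) : Prop :=
  forall a b : M,
    (fun x => atom x /\ mle x a) = (fun x => atom x /\ mle x b) -> a = b.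

Definition proximity (M N : MTAlg) (f : M -> N) : Prop :=
  ((forall a, openM a -> openM (f a)) /\
   f (mtop M) = mtop N /\
   (forall a b, openM a -> openM b -> f (mmeet a b) = mmeet (f a) (f b)) /\
   (forall S : M -> Prop, (forall a, S a -> openM a) ->
       f (msup S) = msup (fun y => exists a, S a /\ y = f a))) /\
  (forall a b, f (mmeet a b) = mmeet (f a) (f b)) /\
  (forall l : list M, (forall x, In x l -> locClosed x) ->
       f (msup (fun x => In x l)) = msup (fun y => exists x, In x l /\ y = f x)) /\
  (forall a, f a = msup (fun y => exists x, locClosed x /\ mle x a /\ y = f x)).

Definition proxComp (M1 M2 M3 : MTAlg) (g : M2 -> M3) (f : M1 -> M2) : M1 -> M3 :=
  fun a => msup (fun z => exists x, locClosed x /\ mle x a /\ z = g (f x)).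

Definition proxId (M : MTAlg) : M -> M :=
  fun a => msup (fun x => locClosed x /\ mle x a).

Definition STDMTP : CatData := {|
  Ob := { M : MTAlg | spatial M /\ TD_alg M };
  Hm := fun M N => mcar (proj1_sig M) -> mcar (proj1_sig N);
  valid := fun M N f => proximity f;
  cmp := fun M1 M2 M3 g f => proxComp g f;
  idm := fun M => proxId (M := proj1_sig M)
|}.

(* A T_D space X gives the MT-algebra of all subsets of X with interior as box;
   a spatial T_D MT-algebra M gives the space of its atoms, whose opens are the
   sets of atoms below open elements.  A sober map f : X ~> Y acts on a locally
   closed set U \ V as {x | U in f x, V not in f x} and on an arbitrary set as the
   union over the locally closed sets it contains; complete primeness of each
   f x makes this a proximity morphism, the delicate point being preservation
   of finite joins of locally closed sets, where the pieces are split off one at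
   a time.  Conversely a proximity morphism h : N -> M sends an atom p of M to
   the completely prime filter of opens {below u | p <= h u}.  Since singletons
   of a T_D space and atoms of a T_D algebra are locally closed, X is recovered
   as the atoms of its powerset and M as the powerset of its atoms, naturally
   in both variables. *)

From Stdlib Require Import List Classical.
From Stdlib Require Import FunctionalExtensionality PropExtensionality ProofIrrelevance.

Set Implicit Arguments.
Unset Strict Implicit.

Ltac fext x := apply functional_extensionality; intro x.
Ltac pext := apply propositional_extensionality.

Section MTAlgebra.
Variable M : MTAlg.
Implicit Types a b c d u v p q : M.
Implicit Types S : M -> Prop.

Definition mjoin a b : M := msup (fun x => x = a \/ x = b).

Lemma mbot_le a : mle (mbot M) a.
Proof. apply msup_least. intros _ []. Qed.

Lemma mle_top a : mle a (mtop M).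
Proof. apply msup_ub. exact I. Qed.

Lemma mle_meet a b c : mle c (mmeet a b) <-> mle c a /\ mle c b.
Proof.
  split.
  - intros H. split; eapply mle_trans; eauto using mmeet_l, mmeet_r.
  - intros [Ha Hb]. apply mmeet_glb; assumption.
Qed.

Lemma mmeetC a b : mmeet a b = mmeet b a.
Proof. apply mle_anti; apply mmeet_glb; auto using mmeet_l, mmeet_r. Qed.

Lemma mmeet_idPl a b : mle a b -> mmeet a b = a.
Proof. intros H. apply mle_anti; [apply mmeet_l | apply mmeet_glb; auto using mle_refl]. Qed.

Lemma mmeet_topr a : mmeet a (mtop M) = a.
Proof. apply mmeet_idPl, mle_top. Qed.

Lemma mjoin_l a b : mle a (mjoin a b).
Proof. apply msup_ub. auto. Qed.

Lemma mjoin_r a b : mle b (mjoin a b).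
Proof. apply msup_ub. auto. Qed.

Lemma mjoin_least a b c : mle a c -> mle b c -> mle (mjoin a b) c.
Proof. intros. apply msup_least. intros x [-> | ->]; assumption. Qed.

Lemma mjoin_botl a : mjoin (mbot M) a = a.
Proof. apply mle_anti; auto using mjoin_least, mbot_le, mle_refl, mjoin_r. Qed.

Lemma mjoin_topl a : mjoin (mtop M) a = mtop M.
Proof. apply mle_anti; auto using mle_top, mjoin_l. Qed.

Lemma mmeet_joinr a b c : mmeet a (mjoin b c) = mjoin (mmeet a b) (mmeet a c).
Proof. apply mdistr. Qed.

Lemma mjoin_neg a : mjoin a (mneg a) = mtop M.
Proof. apply mneg_join. Qed.

Lemma mmeet_split a b : a = mjoin (mmeet a b) (mmeet a (mneg b)).
Proof. rewrite <- mmeet_joinr, mjoin_neg. symmetry. apply mmeet_topr. Qed.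

(* Infinite distributivity from the binary law, using complements:
   [msup S <= t \/ ~ a] where [t] is the join of the [a /\ s]. *)
Lemma mmeet_sup_le a S :
  mle (mmeet a (msup S)) (msup (fun y => exists s, S s /\ y = mmeet a s)).
Proof.
  set (t := msup (fun y => exists s, S s /\ y = mmeet a s)).
  assert (HS : mle (msup S) (mjoin t (mneg a))).
  { apply msup_least. intros s Hs. rewrite (mmeet_split s a). apply mjoin_least.
    - eapply mle_trans; [|apply mjoin_l]. apply msup_ub. exists s. split; auto using mmeetC.
    - eapply mle_trans; [apply mmeet_r | apply mjoin_r]. }
  apply mle_trans with (mmeet a (mjoin t (mneg a))).
  - apply mmeet_glb; [apply mmeet_l | eapply mle_trans; [apply mmeet_r | exact HS]].
  - rewrite mmeet_joinr, mneg_meet. apply mjoin_least; [apply mmeet_r | apply mbot_le].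
Qed.

Lemma mneg_unique a b : mmeet a b = mbot M -> mjoin a b = mtop M -> mneg a = b.
Proof.
  intros Hmeet Hjoin.
  assert (Hb : b = mmeet b (mneg a)).
  { rewrite (mmeet_split b a) at 1. rewrite mmeetC, Hmeet, mjoin_botl. reflexivity. }
  assert (Ha : mneg a = mmeet (mneg a) b).
  { rewrite <- (mmeet_topr (mneg a)) at 1.
    rewrite <- Hjoin, mmeet_joinr, mmeetC, mneg_meet, mjoin_botl. reflexivity. }
  rewrite Ha, mmeetC. symmetry. exact Hb.
Qed.

Lemma atom_nle_bot p : atom p -> ~ mle p (mbot M).
Proof. intros [Hp _] Hle. apply Hp, mle_anti; auto using mbot_le. Qed.

Lemma atom_le_eq p q : atom p -> atom q -> mle p q -> p = q.
Proof.
  intros Hp [_ Hq] Hpq. destruct (Hq p Hpq) as [-> | ->]; [|reflexivity].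
  destruct Hp; contradiction.
Qed.

Lemma atom_le_sup p S : atom p -> mle p (msup S) -> exists s, S s /\ mle p s.
Proof.
  intros Hp Hle. apply NNPP. intros Hnone. apply (atom_nle_bot Hp).
  rewrite <- (mmeet_idPl Hle). eapply mle_trans; [apply mmeet_sup_le|].
  apply msup_least. intros y [s [Hs ->]].
  destruct (proj2 Hp _ (mmeet_l p s)) as [-> | Eps]; [apply mle_refl|].
  exfalso. apply Hnone. exists s. split; [assumption|]. rewrite <- Eps. apply mmeet_r.
Qed.

Lemma atom_le_neg p a : atom p -> mle p (mneg a) <-> ~ mle p a.
Proof.
  intros Hp. split.
  - intros Hneg Ha. apply (atom_nle_bot Hp). unfold mbot. rewrite <- (mneg_meet a).
    apply mmeet_glb; assumption.
  - intros Hna. rewrite (mmeet_split p a).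
    destruct (proj2 Hp _ (mmeet_l p a)) as [-> | Epa].
    + apply mjoin_least; [apply mbot_le | apply mmeet_r].
    + exfalso. apply Hna. rewrite <- Epa. apply mmeet_r.
Qed.

Lemma mbox_mono a b : mle a b -> mle (mbox a) (mbox b).
Proof. intros H. rewrite <- (mmeet_idPl H), mbox_meet. apply mmeet_r. Qed.

Lemma openM_box a : openM (mbox a).
Proof. apply mle_anti; [apply mbox_defl | apply mbox_4]. Qed.

Lemma openM_top : openM (mtop M).
Proof. apply mbox_top. Qed.

Lemma openM_meet u v : openM u -> openM v -> openM (mmeet u v).
Proof. unfold openM. intros Hu Hv. rewrite mbox_meet, Hu, Hv. reflexivity. Qed.

Lemma openM_sup S : (forall u, S u -> openM u) -> openM (msup S).
Proof.
  intros HS. apply mle_anti; [apply mbox_defl|]. apply msup_least. intros u Hu.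
  rewrite <- (HS u Hu). apply mbox_mono, msup_ub, Hu.
Qed.

Lemma mneg_top : mneg (mtop M) = mbot M.
Proof. apply mneg_unique; [rewrite mmeetC; apply mmeet_topr | apply mjoin_topl]. Qed.

Lemma mneg_bot : mneg (mbot M) = mtop M.
Proof.
  apply mneg_unique; [apply mmeet_idPl, mbot_le | apply mjoin_botl].
Qed.

Lemma mdia_top : mdia (mtop M) = mtop M.
Proof.
  unfold mdia. rewrite mneg_top.
  replace (mbox (mbot M)) with (mbot M) by (apply mle_anti; auto using mbot_le, mbox_defl).
  apply mneg_bot.
Qed.

Lemma open_locClosed u : openM u -> locClosed u.
Proof. intros Hu. exists u, (mtop M). rewrite Hu, mdia_top, mmeet_topr. reflexivity. Qed.

Lemma mdia_locClosed d : locClosed (mdia d).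
Proof. exists (mtop M), d. rewrite mbox_top, mmeetC, mmeet_topr. reflexivity. Qed.

Lemma TD_atom_locClosed p : TD_alg M -> atom p -> locClosed p.
Proof.
  intros HTD Hp. destruct (HTD p) as [S [HS Ep]].
  assert (Hps : mle p (msup S)) by (rewrite <- Ep; apply mle_refl).
  destruct (atom_le_sup Hp Hps) as [s [Hs Hle]].
  assert (Hsp : mle s p) by (rewrite Ep; apply msup_ub, Hs).
  destruct (proj2 Hp s Hsp) as [-> | <-]; [exfalso; exact (atom_nle_bot Hp Hle) | exact (HS s Hs)].
Qed.

Lemma spatial_eq a b : spatial M -> (forall p, atom p -> (mle p a <-> mle p b)) -> a = b.
Proof.
  intros Hsp H. apply Hsp. fext p. pext.
  split; intros [Hp Hle]; split; [| apply H | | apply H]; assumption.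
Qed.

Lemma spatial_le a b : spatial M -> (forall p, atom p -> mle p a -> mle p b) -> mle a b.
Proof.
  intros Hsp H. rewrite <- (spatial_eq (a := mmeet a b) Hsp); [apply mmeet_r|].
  intros p Hp. rewrite mle_meet. split; [intros [Ha _] | intros Ha; split]; auto.
Qed.

Lemma spatial_bot a : spatial M -> (forall p, atom p -> ~ mle p a) -> a = mbot M.
Proof.
  intros Hsp H. apply spatial_eq; [exact Hsp|]. intros p Hp.
  split; intros Hle; exfalso; [exact (H p Hp Hle) | exact (atom_nle_bot Hp Hle)].
Qed.

End MTAlgebra.

Section Proximity.
Variables M N : MTAlg.
Variable f : M -> N.
Hypothesis Hf : proximity f.

Lemma prox_meet a b : f (mmeet a b) = mmeet (f a) (f b).
Proof. apply Hf. Qed.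

Lemma prox_mono a b : mle a b -> mle (f a) (f b).
Proof. intros H. rewrite <- (mmeet_idPl H), prox_meet. apply mmeet_r. Qed.

Lemma prox_open u : openM u -> openM (f u).
Proof. apply Hf. Qed.

Lemma prox_top : f (mtop M) = mtop N.
Proof. apply Hf. Qed.

Lemma prox_sup_open S : (forall u, S u -> openM u) ->
  f (msup S) = msup (fun y => exists u, S u /\ y = f u).
Proof. apply Hf. Qed.

Lemma prox_bot : f (mbot M) = mbot N.
Proof.
  destruct Hf as [_ [_ [Hjoin _]]].
  apply mle_anti; [|apply mbot_le]. change (mbot M) with (msup (fun x : M => In x nil)).
  rewrite Hjoin by (intros x []). apply msup_least. intros y [x [[] _]].
Qed.

Lemma prox_join_locClosed a b : locClosed a -> locClosed b ->
  f (mjoin a b) = mjoin (f a) (f b).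
Proof.
  intros Ha Hb. destruct Hf as [_ [_ [Hjoin _]]].
  assert (Eab : mjoin a b = msup (fun x => In x (a :: b :: nil))).
  { unfold mjoin. f_equal. fext x. pext. simpl. intuition. }
  rewrite Eab, Hjoin by (simpl; intros x [<- | [<- | []]]; assumption).
  unfold mjoin. f_equal. fext y. pext. simpl.
  split; [intros [x [[<- | [<- | []]] ->]] | intros [-> | ->]]; eauto.
Qed.

Lemma prox_mdia d : f (mdia d) = mneg (f (mbox (mneg d))).
Proof.
  symmetry. apply mneg_unique.
  - rewrite <- prox_meet. unfold mdia. rewrite mneg_meet. apply prox_bot.
  - rewrite <- prox_join_locClosed by auto using open_locClosed, openM_box, mdia_locClosed.
    unfold mdia. rewrite mjoin_neg. apply prox_top.
Qed.

End Proximity.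

(* T_D is needed for (P4) only: every element is a join of locally closed ones. *)
Lemma proximity_of_complete_hom (M N : MTAlg) (f : M -> N) : TD_alg M ->
  (forall u, openM u -> openM (f u)) -> f (mtop M) = mtop N ->
  (forall a b, f (mmeet a b) = mmeet (f a) (f b)) ->
  (forall S, f (msup S) = msup (fun y => exists a, S a /\ y = f a)) ->
  proximity f.
Proof.
  intros HTD Hopen Htop Hmeet Hsup.
  assert (Hmono : forall a b, mle a b -> mle (f a) (f b)).
  { intros a b H. rewrite <- (mmeet_idPl H), Hmeet. apply mmeet_r. }
  split; [split; [|split; [|split]] | split; [|split]]; auto.
  intros a. apply mle_anti.
  - destruct (HTD a) as [S [HS Ea]]. rewrite Ea at 1. rewrite Hsup.
    apply msup_least. intros y [x [Hx ->]]. apply msup_ub. exists x.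
    split; [auto | split; [rewrite Ea; apply msup_ub, Hx | reflexivity]].
  - apply msup_least. intros y [x [_ [Hx ->]]]. auto.
Qed.

Lemma proxComp_ext (M1 M2 M2' M3 : MTAlg) (g : M2 -> M3) (f : M1 -> M2)
  (g' : M2' -> M3) (f' : M1 -> M2') :
  (forall x, locClosed x -> g (f x) = g' (f' x)) -> proxComp g f = proxComp g' f'.
Proof.
  intros H. fext a. unfold proxComp. f_equal. fext z. pext.
  split; intros [x [Hx [Hxa ->]]]; exists x; rewrite H by assumption; auto.
Qed.

Lemma proxComp_idE (M1 M2 : MTAlg) (g : M2 -> M1) (f : M1 -> M2) :
  (forall x, locClosed x -> g (f x) = x) -> proxComp g f = @proxId M1.
Proof.
  intros H. fext a. unfold proxComp, proxId. f_equal. fext z. pext. split.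
  - intros [x [Hx [Hxa ->]]]. rewrite H; auto.
  - intros [Hz Hza]. exists z. rewrite H; auto.
Qed.

Lemma proxComp_open (M1 M2 M3 : MTAlg) (g : M2 -> M3) (f : M1 -> M2) (u : M1) :
  proximity f -> proximity g -> openM u -> proxComp g f u = g (f u).
Proof.
  intros Hf Hg Hu. apply mle_anti.
  - apply msup_least. intros z [x [_ [Hx ->]]]. apply (prox_mono Hg), (prox_mono Hf), Hx.
  - apply msup_ub. exists u. auto using open_locClosed, mle_refl.
Qed.

Lemma proxId_open (M : MTAlg) (u : M) : openM u -> proxId u = u.
Proof.
  intros Hu. apply mle_anti.
  - apply msup_least. intros a [_ H]. exact H.
  - apply msup_ub. auto using open_locClosed, mle_refl.
Qed.

Section PowersetAlgebra.
Variable X : Space.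
Implicit Types A B U V : X -> Prop.

Lemma set_ext A B : (forall x, A x -> B x) -> (forall x, B x -> A x) -> A = B.
Proof. intros HAB HBA. fext x. pext. split; auto. Qed.

Lemma open_empty : isOpen (fun _ : X => False).
Proof.
  replace (fun _ : X => False) with (fun x => exists U, (fun _ : X -> Prop => False) U /\ U x).
  - apply open_union. intros _ [].
  - apply set_ext; [intros x [_ [[] _]] | intros x []].
Qed.

Lemma open_or U V : isOpen U -> isOpen V -> isOpen (fun x => U x \/ V x).
Proof.
  intros HU HV.
  replace (fun x => U x \/ V x) with (fun x => exists W, (W = U \/ W = V) /\ W x).
  - apply open_union. intros W [-> | ->]; assumption.
  - apply set_ext; [intros x [W [[-> | ->] Hx]] | intros x [Hx | Hx]]; eauto.
Qed.

Definition interior A : X -> Prop :=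
  fun x => exists U, (isOpen U /\ forall y, U y -> A y) /\ U x.

Lemma interior_open A : isOpen (interior A).
Proof. apply open_union. intros U [HU _]. exact HU. Qed.

Lemma interior_of_open A : isOpen A -> interior A = A.
Proof.
  intros HA. apply set_ext; [intros x [U [[_ HUA] Hx]]; auto | intros x Hx; exists A; auto].
Qed.

Definition powerset_alg : MTAlg.
Proof.
  refine (@Build_MTAlg (X -> Prop) (fun A B => forall x, A x -> B x) _ _ set_ext
            (fun F x => exists A, F A /\ A x) _ _ (fun A B x => A x /\ B x) _ _ _ _
            (fun A x => ~ A x) _ _ interior _ _ _ _); try solve [firstorder].
  - intros A B C. apply set_ext.
    + intros x [Ha [D [[-> | ->] Hx]]];
        [exists (fun y => A y /\ B y) | exists (fun y => A y /\ C y)]; auto.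
    + intros x [D [[-> | ->] [Ha Hx]]]; split; eauto.
  - intros A. apply set_ext; [intros x []; contradiction | intros x [_ [[] _]]].
  - intros A. apply set_ext; [intros x _; exists (fun _ => True); auto|].
    intros x _. destruct (classic (A x)); [exists A | exists (fun x => ~ A x)]; auto.
  - replace (fun x : X => exists A : X -> Prop, True /\ A x) with (fun _ : X => True)
      by (apply set_ext; [intros x _; exists (fun _ => True) | ]; auto).
    apply interior_of_open, open_full.
  - intros A B. apply set_ext.
    + intros x [U [[HU HAB] Hx]]. split; exists U; firstorder.
    + intros x [[U [[HU HA] HUx]] [V [[HV HB] HVx]]]. exists (fun y => U y /\ V y).
      split; [split; [apply open_meet; assumption | firstorder] | auto].
Defined.

Lemma powerset_openM (A : powerset_alg) : openM A <-> isOpen A.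
Proof.
  unfold openM. split; [intros E; rewrite <- E; apply interior_open | apply interior_of_open].
Qed.

Lemma powerset_top : mtop powerset_alg = fun _ => True.
Proof. fext x. pext. split; [auto | intros _; exists (fun _ => True); simpl; auto]. Qed.

Lemma powerset_locClosed (C : powerset_alg) : locClosed C <->
  exists U V, isOpen U /\ isOpen V /\ C = (fun y => U y /\ ~ V y).
Proof.
  split.
  - intros [B [D ->]]. exists (interior B), (interior (fun x => ~ D x)).
    split; [apply interior_open | split; [apply interior_open | reflexivity]].
  - intros [U [V [HU [HV ->]]]]. exists U, (fun x => ~ V x).
    unfold mdia. simpl. rewrite (interior_of_open HU).
    replace (fun x => ~ ~ V x) with V by (fext x; pext; tauto).
    rewrite (interior_of_open HV). reflexivity.
Qed.

Definition sing (x : X) : powerset_alg := fun y => y = x.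

Lemma sing_atom x : atom (sing x).
Proof.
  split.
  - intros E. assert (H : sing x x) by reflexivity. rewrite E in H. destruct H as [_ [[] _]].
  - intros A HA. destruct (classic (A x)) as [Hx | Hx].
    + right. apply set_ext; [exact HA | intros y ->; exact Hx].
    + left. apply set_ext; [| intros y [_ [[] _]]].
      intros y Hy. rewrite (HA y Hy) in Hy. contradiction.
Qed.

Lemma powerset_atom (A : powerset_alg) : atom A -> exists x, A = sing x.
Proof.
  intros [Hnb HA]. destruct (classic (exists x, A x)) as [[x Hx] | Hempty].
  - exists x. destruct (HA (sing x)) as [E | E]; [intros y -> | | ]; auto.
    exfalso. apply (proj1 (sing_atom x)), E.
  - exfalso. apply Hnb, set_ext; [intros x Hx; exfalso; eauto | intros y [_ [[] _]]].
Qed.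

Lemma powerset_spatial : spatial powerset_alg.
Proof.
  intros A B E.
  assert (Hmem : forall (C : powerset_alg) x, C x <-> atom (sing x) /\ mle (sing x) C).
  { intros C x. split.
    - intros Hx. split; [apply sing_atom | intros y ->; exact Hx].
    - intros [_ H]. apply H. reflexivity. }
  apply set_ext; intros x; rewrite (Hmem A x), (Hmem B x), (equal_f E (sing x)); auto.
Qed.

Lemma sing_locClosed x : TD_space X -> locClosed (sing x).
Proof.
  intros HTD. destruct (HTD x) as [U [HU [Hx [V [HV HUV]]]]]. apply powerset_locClosed.
  exists U, V. split; [exact HU | split; [exact HV|]].
  fext y. pext. unfold sing. split.
  - intros ->. split; [exact Hx | intros HVx; exact (proj1 (HUV x Hx) HVx eq_refl)].
  - intros [HUy HVy]. apply NNPP. intros Hne. apply HVy, HUV; assumption.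
Qed.

Lemma powerset_TD : TD_space X -> TD_alg powerset_alg.
Proof.
  intros HTD A. exists (fun C => locClosed C /\ mle C A). split; [intros C [HC _]; exact HC|].
  apply set_ext.
  - intros x Hx. exists (sing x).
    split; [split; [apply sing_locClosed, HTD | intros y ->; exact Hx] | reflexivity].
  - intros x [C [[_ HCA] Hx]]. exact (HCA x Hx).
Qed.

End PowersetAlgebra.

Section AtomSpace.
Variable M : MTAlg.
Implicit Types u v : M.

Definition below u : {p : M | atom p} -> Prop := fun q => mle (proj1_sig q) u.

Definition atom_open (W : {p : M | atom p} -> Prop) : Prop := exists u, openM u /\ W = below u.

Lemma below_meet u v : below (mmeet u v) = fun q => below u q /\ below v q.
Proof. fext q. pext. apply mle_meet. Qed.

Lemma below_top : below (mtop M) = fun _ => True.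
Proof. fext q. pext. split; [auto | intros _; apply mle_top]. Qed.

Lemma below_sup S q : below (msup S) q <-> exists s, S s /\ below s q.
Proof.
  split; [apply atom_le_sup, proj2_sig|].
  intros [s [Hs Hq]]. eapply mle_trans; [exact Hq | apply msup_ub, Hs].
Qed.

Lemma below_mneg a q : below (mneg a) q <-> ~ below a q.
Proof. apply atom_le_neg, proj2_sig. Qed.

Lemma atom_open_union F : (forall W, F W -> atom_open W) ->
  (fun q => exists W, F W /\ W q) = below (msup (fun u => openM u /\ F (below u))).
Proof.
  intros HF. fext q. pext. rewrite below_sup. split.
  - intros [W [HW Hq]]. destruct (HF W HW) as [u [Hu ->]]. eauto.
  - intros [u [[_ Hu] Hq]]. eauto.
Qed.

Definition atom_space : Space.
Proof.
  refine {| pts := {p : M | atom p}; isOpen := atom_open |}.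
  - exists (mtop M). rewrite below_top. split; [apply openM_top | reflexivity].
  - intros U V [u [Hu ->]] [v [Hv ->]]. exists (mmeet u v).
    rewrite below_meet. split; [apply openM_meet; assumption | reflexivity].
  - intros F HF. rewrite (atom_open_union HF). eexists. split; [|reflexivity].
    apply openM_sup. intros u [Hu _]. exact Hu.
Defined.

Lemma atom_eq (p q : atom_space) : proj1_sig p = proj1_sig q -> p = q.
Proof. destruct p, q. simpl. intros ->. f_equal. apply proof_irrelevance. Qed.

Lemma atom_space_TD : TD_alg M -> TD_space atom_space.
Proof.
  intros HTD p. destruct (TD_atom_locClosed HTD (proj2_sig p)) as [b [c Ep]].
  exists (below (mbox b)). split; [exists (mbox b); split; [apply openM_box | reflexivity]|].
  split; [unfold below; rewrite Ep at 1; apply mmeet_l|].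
  exists (below (mbox (mneg c))).
  split; [exists (mbox (mneg c)); split; [apply openM_box | reflexivity]|].
  intros q Hqb.
  assert (Hp : below (mmeet (mbox b) (mdia c)) q <-> q = p).
  { rewrite <- Ep. split; [intros Hqp | intros ->; apply mle_refl].
    apply atom_eq, atom_le_eq; [apply proj2_sig | apply proj2_sig | exact Hqp]. }
  rewrite below_meet in Hp. unfold mdia in Hp. rewrite below_mneg in Hp. split.
  - intros Hnc ->. exact (proj2 (proj2 Hp eq_refl) Hnc).
  - intros Hne. apply NNPP. intros Hnc. apply Hne, Hp. split; assumption.
Qed.

Hypothesis Hsp : spatial M.

Lemma below_sub u v : (forall q, below u q -> below v q) -> mle u v.
Proof. intros H. apply spatial_le; [exact Hsp|]. intros p Hp. exact (H (exist _ p Hp)). Qed.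

Lemma below_inj u v : below u = below v -> u = v.
Proof. intros E. apply mle_anti; apply below_sub; rewrite E; auto. Qed.

End AtomSpace.

Section CompletelyPrimeFilter.
Variable Y : Space.
Variable P : (Y -> Prop) -> Prop.
Hypothesis HP : cpfilter P.
Implicit Types A B U V : Y -> Prop.

Lemma cp_open U : P U -> isOpen U.
Proof. apply HP. Qed.

Lemma cp_full : P (fun _ => True).
Proof. apply HP. Qed.

Lemma cp_up U V : P U -> isOpen V -> (forall y, U y -> V y) -> P V.
Proof. intros HU HV HUV. apply (proj1 (proj2 (proj2 HP)) U V); auto using cp_open. Qed.

Lemma cp_meet U V : P U -> P V -> P (fun y => U y /\ V y).
Proof. apply HP. Qed.

Lemma cp_union (F : (Y -> Prop) -> Prop) : (forall U, F U -> isOpen U) ->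
  P (fun y => exists U, F U /\ U y) -> exists U, F U /\ P U.
Proof. apply HP. Qed.

Lemma cp_or U V : isOpen U -> isOpen V -> P (fun y => U y \/ V y) -> P U \/ P V.
Proof.
  intros HU HV H.
  destruct (@cp_union (fun W => W = U \/ W = V)) as [W [[-> | ->] HW]]; auto.
  - intros W [-> | ->]; assumption.
  - eapply cp_up; [exact H | apply open_union; intros W [-> | ->]; assumption |].
    intros y [Hy | Hy]; eauto.
Qed.

Lemma cp_not_empty : ~ P (fun _ => False).
Proof.
  intros H. destruct (@cp_union (fun _ => False)) as [_ [[] _]]; [intros _ [] |].
  eapply cp_up; [exact H | apply open_union; intros _ [] | intros y []].
Qed.

(* The soberification turns an open [U] into [{Q | Q U}]; [pt_in P A] says that
   the point [P] lies in the image of some locally closed [U \ V] contained in [A]. *)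
Definition pt_in A : Prop :=
  exists U V, isOpen U /\ isOpen V /\ (forall y, U y -> ~ V y -> A y) /\ P U /\ ~ P V.

Lemma pt_in_mono A B : (forall y, A y -> B y) -> pt_in A -> pt_in B.
Proof. intros HAB [U [V [HU [HV [HUV HPUV]]]]]. exists U, V. eauto 6. Qed.

Lemma pt_in_open A : isOpen A -> (pt_in A <-> P A).
Proof.
  intros HA. split.
  - intros [U [V [HU [HV [HUV [HPU HPV]]]]]].
    destruct (@cp_or A V) as [H | H]; auto; [| contradiction].
    eapply cp_up; [exact HPU | apply open_or; assumption |].
    intros y Hy. destruct (classic (V y)); auto.
  - intros HPA. exists A, (fun _ => False).
    auto using open_empty, cp_not_empty.
Qed.

Lemma pt_in_diff U V : isOpen U -> isOpen V ->
  (pt_in (fun y => U y /\ ~ V y) <-> P U /\ ~ P V).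
Proof.
  intros HU HV. split; [| intros [HPU HPV]; exists U, V; auto].
  intros [U1 [V1 [HU1 [HV1 [HUV1 [HPU1 HPV1]]]]]]. split.
  - destruct (@cp_or U V1) as [H | H]; auto; [| contradiction].
    eapply cp_up; [exact HPU1 | apply open_or; assumption |].
    intros y Hy. destruct (classic (V1 y)); [right | left; apply HUV1]; auto.
  - intros HPV. apply HPV1. eapply cp_up; [apply (cp_meet HPU1 HPV) | exact HV1 |].
    intros y [Hy HVy]. apply NNPP. intros HV1y. exact (proj2 (HUV1 y Hy HV1y) HVy).
Qed.

Lemma pt_in_meet A B : pt_in (fun y => A y /\ B y) <-> pt_in A /\ pt_in B.
Proof.
  split; [intros H; split; revert H; apply pt_in_mono; tauto |].
  intros [[U1 [V1 [HU1 [HV1 [HUV1 [HPU1 HPV1]]]]]] [U2 [V2 [HU2 [HV2 [HUV2 [HPU2 HPV2]]]]]]].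
  exists (fun y => U1 y /\ U2 y), (fun y => V1 y \/ V2 y).
  split; [apply open_meet; assumption|]. split; [apply open_or; assumption|].
  split; [intros y [Hy1 Hy2] Hny; split; [apply HUV1 | apply HUV2]; tauto|].
  split; [apply cp_meet; assumption|].
  intros H. destruct (cp_or HV1 HV2 H); contradiction.
Qed.

Lemma pt_in_union_diff A U V : isOpen U -> isOpen V ->
  pt_in (fun y => A y \/ (U y /\ ~ V y)) -> pt_in A \/ (P U /\ ~ P V).
Proof.
  intros HU HV [U0 [V0 [HU0 [HV0 [HUV0 [HPU0 HPV0]]]]]].
  destruct (classic (P U /\ ~ P V)) as [HPUV | HPUV]; [right; exact HPUV | left].
  destruct (classic (P U)) as [HPU | HPU].
  - assert (HPV : P V) by (apply NNPP; tauto).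
    exists (fun y => U0 y /\ V y), V0.
    split; [apply open_meet; assumption|]. split; [exact HV0|].
    split; [| split; [apply cp_meet; assumption | exact HPV0]].
    intros y [Hy HVy] Hny. destruct (HUV0 y Hy Hny) as [HA | [_ HnV]]; [exact HA | contradiction].
  - exists U0, (fun y => V0 y \/ U y).
    split; [exact HU0|]. split; [apply open_or; assumption|]. split; [| split; [exact HPU0 |]].
    + intros y Hy Hny. destruct (HUV0 y Hy) as [HA | [HUy _]]; tauto.
    + intros H. destruct (cp_or HV0 HU H); contradiction.
Qed.

Lemma pt_in_empty : ~ pt_in (fun _ => False).
Proof.
  intros [U [V [HU [HV [HUV [HPU HPV]]]]]]. apply HPV.
  eapply cp_up; [exact HPU | exact HV |]. intros y Hy. apply NNPP. exact (HUV y Hy).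
Qed.

Lemma pt_in_finite_union (l : list (powerset_alg Y)) : (forall C, In C l -> locClosed C) ->
  pt_in (fun y => exists C, In C l /\ C y) -> exists C, In C l /\ pt_in C.
Proof.
  induction l as [| C l IH]; intros Hl H.
  - exfalso. apply pt_in_empty. revert H. apply pt_in_mono. intros y [C [[] _]].
  - destruct (proj1 (powerset_locClosed C) (Hl C (or_introl eq_refl))) as [U [V [HU [HV ->]]]].
    assert (Hsplit : pt_in (fun y => (exists C, In C l /\ C y) \/ (U y /\ ~ V y))).
    { revert H. apply pt_in_mono. intros y [C' [[<- | HC'] Hy]]; eauto. }
    destruct (pt_in_union_diff HU HV Hsplit) as [Hl' | HUV].
    + destruct (IH (fun C' HC' => Hl C' (or_intror HC')) Hl') as [C' [HC' Hin]].
      exists C'. split; [right |]; assumption.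
    + exists (fun y => U y /\ ~ V y). split; [left; reflexivity | apply pt_in_diff; assumption].
Qed.

End CompletelyPrimeFilter.

Section SoberToProximity.
Variables X Y : Space.
Variable f : rawSober X Y.
Hypothesis Hf : soberMap f.

Definition prox_of_sober : powerset_alg Y -> powerset_alg X := fun A x => pt_in (f x) A.

Lemma prox_of_sober_open (A : powerset_alg Y) : isOpen A -> prox_of_sober A = fun x => f x A.
Proof. intros HA. fext x. pext. apply pt_in_open; [apply Hf | exact HA]. Qed.

Lemma prox_of_sober_diff U V : isOpen U -> isOpen V ->
  prox_of_sober (fun y => U y /\ ~ V y) = fun x => f x U /\ ~ f x V.
Proof. intros HU HV. fext x. pext. apply pt_in_diff; [apply Hf | exact HU | exact HV]. Qed.

Lemma prox_of_sober_mono (A B : powerset_alg Y) :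
  mle A B -> mle (prox_of_sober A) (prox_of_sober B).
Proof. intros HAB x. apply pt_in_mono, HAB. Qed.

Lemma prox_of_sober_sup_open (S : powerset_alg Y -> Prop) : (forall A, S A -> isOpen A) ->
  prox_of_sober (msup S) = msup (fun B => exists A, S A /\ B = prox_of_sober A).
Proof.
  intros HS. rewrite prox_of_sober_open by (apply open_union; exact HS). fext x. pext. split.
  - intros H. destruct (cp_union (proj1 Hf x) HS H) as [A [HA Hx]].
    exists (prox_of_sober A). split; [eauto | rewrite prox_of_sober_open; auto].
  - intros [B [[A [HA ->]] Hx]]. rewrite prox_of_sober_open in Hx by auto.
    eapply cp_up; [apply Hf | exact Hx | apply open_union; exact HS | intros y Hy; exists A; auto].
Qed.

Lemma prox_of_sober_finite_join (l : list (powerset_alg Y)) : (forall C, In C l -> locClosed C) ->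
  prox_of_sober (msup (fun C => In C l)) = msup (fun B => exists C, In C l /\ B = prox_of_sober C).
Proof.
  intros Hl. apply mle_anti.
  - intros x Hx. destruct (pt_in_finite_union (proj1 Hf x) Hl Hx) as [C [HC HxC]].
    exists (prox_of_sober C). split; [exists C |]; auto.
  - apply msup_least. intros B [C [HC ->]]. apply prox_of_sober_mono, msup_ub, HC.
Qed.

Lemma prox_of_sober_locClosed_approx (A : powerset_alg Y) :
  prox_of_sober A = msup (fun B => exists C, locClosed C /\ mle C A /\ B = prox_of_sober C).
Proof.
  apply mle_anti.
  - intros x [U [V [HU [HV [HUV HfUV]]]]].
    exists (prox_of_sober (fun y => U y /\ ~ V y)). split.
    + exists (fun y => U y /\ ~ V y). split; [apply powerset_locClosed; eauto 6|].
      split; [intros y []; auto | reflexivity].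
    + rewrite prox_of_sober_diff; assumption.
  - apply msup_least. intros B [C [_ [HCA ->]]]. apply prox_of_sober_mono, HCA.
Qed.

Lemma prox_of_sober_prox : proximity prox_of_sober.
Proof.
  assert (Hmeet : forall A B,
    prox_of_sober (mmeet A B) = mmeet (prox_of_sober A) (prox_of_sober B)).
  { intros A B. fext x. pext. apply pt_in_meet, Hf. }
  split; [split; [|split; [|split]] | split; [|split]];
    auto using prox_of_sober_finite_join, prox_of_sober_locClosed_approx.
  - intros A HA. apply powerset_openM in HA. apply powerset_openM.
    rewrite prox_of_sober_open by exact HA. apply Hf, HA.
  - rewrite !powerset_top, prox_of_sober_open by apply open_full.
    fext x. pext. split; [auto | intros _; apply cp_full, Hf].
  - intros S HS. apply prox_of_sober_sup_open. intros A HA. apply powerset_openM, HS, HA.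
Qed.

End SoberToProximity.

Lemma prox_of_sober_lambda (X : Space) : prox_of_sober (@lambdaS X) = @proxId (powerset_alg X).
Proof.
  fext A. fext x. pext. unfold prox_of_sober, proxId, lambdaS. split.
  - intros [U [V [HU [HV [HUV [[_ HUx] HVx]]]]]]. exists (fun y => U y /\ ~ V y).
    split; [split; [apply powerset_locClosed; eauto 6 | intros y []; auto] | split; tauto].
  - intros [C [[HC HCA] HCx]]. destruct (proj1 (powerset_locClosed C) HC) as [U [V [HU [HV ->]]]].
    exists U, V. destruct HCx as [HUx HVx].
    split; [exact HU | split; [exact HV | split; [| tauto]]].
    intros y HUy HVy. apply HCA. split; assumption.
Qed.

Lemma prox_of_sober_comp (X Y Z : Space) (f : rawSober X Y) (g : rawSober Y Z) :
  soberMap f -> soberMap g ->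
  prox_of_sober (soberComp g f) = proxComp (prox_of_sober f) (prox_of_sober g).
Proof.
  intros Hf Hg. fext A. fext x. pext. unfold proxComp. simpl. split.
  - intros [U [V [HU [HV [HUV HfUV]]]]].
    exists (prox_of_sober f (prox_of_sober g (fun z => U z /\ ~ V z))). split.
    + exists (fun z => U z /\ ~ V z). split; [apply powerset_locClosed; eauto 6|].
      split; [intros z []; auto | reflexivity].
    + unfold prox_of_sober at 1. rewrite (prox_of_sober_diff Hg HU HV).
      rewrite (pt_in_diff (proj1 Hf x) (proj2 Hg U HU) (proj2 Hg V HV)). exact HfUV.
  - intros [B [[C [HC [HCA ->]]] Hx]].
    destruct (proj1 (powerset_locClosed C) HC) as [U [V [HU [HV ->]]]].
    unfold prox_of_sober at 1 in Hx. rewrite (prox_of_sober_diff Hg HU HV) in Hx.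
    rewrite (pt_in_diff (proj1 Hf x) (proj2 Hg U HU) (proj2 Hg V HV)) in Hx.
    exists U, V. split; [|split]; auto.
Qed.

Section ProximityToSober.
Variables M N : MTAlg.
Variable h : N -> M.
Hypothesis HsN : spatial N.
Hypothesis Hh : proximity h.

Definition sober_of_prox : rawSober (atom_space M) (atom_space N) :=
  fun p W => exists u, openM u /\ W = below u /\ mle (proj1_sig p) (h u).

Lemma sober_of_prox_below p u : openM u -> (sober_of_prox p (below u) <-> mle (proj1_sig p) (h u)).
Proof.
  intros Hu. split; [| intros Hp; exists u; auto].
  intros [v [_ [Euv Hp]]]. rewrite (below_inj HsN Euv). exact Hp.
Qed.

Lemma sober_of_prox_inhabited p W : sober_of_prox p W -> exists q, W q.
Proof.
  intros [v [_ [-> Hp]]]. apply NNPP. intros Hnone.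
  assert (Ev : v = mbot N).
  { apply spatial_bot; [exact HsN|]. intros q Hq Hqv.
    apply Hnone. exists (exist _ q Hq). exact Hqv. }
  rewrite Ev, (prox_bot Hh) in Hp. exact (atom_nle_bot (proj2_sig p) Hp).
Qed.

Lemma sober_of_prox_cpfilter p : cpfilter (sober_of_prox p).
Proof.
  split; [| split; [| split; [| split]]].
  - intros W [u [Hu [-> _]]]. exists u. auto.
  - exists (mtop N). rewrite below_top, (prox_top Hh). auto using openM_top, mle_top.
  - intros U V _ [v [Hv ->]] [u [Hu [-> Hp]]] HUV.
    exists v. split; [exact Hv | split; [reflexivity|]].
    eapply mle_trans; [exact Hp | apply (prox_mono Hh), (below_sub HsN), HUV].
  - intros U V [u [Hu [-> Hpu]]] [v [Hv [-> Hpv]]]. exists (mmeet u v).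
    rewrite below_meet, (prox_meet Hh). auto using openM_meet, mmeet_glb.
  - intros F HF [w [_ [Ew Hp]]].
    set (S := fun u => openM u /\ F (below u)).
    assert (HwS : w = msup S).
    { apply (below_inj HsN). rewrite <- Ew. apply (atom_open_union HF). }
    rewrite HwS, (prox_sup_open Hh) in Hp by (intros u [Hu _]; exact Hu).
    destruct (atom_le_sup (proj2_sig p) Hp) as [y [[u [[Hu HFu] ->]] Hpu]].
    exists (below u). split; [exact HFu | exists u; auto].
Qed.

Lemma sober_of_prox_valid : soberMap sober_of_prox.
Proof.
  split; [exact sober_of_prox_cpfilter|].
  intros V [v [Hv ->]]. exists (h v). split; [apply (prox_open Hh), Hv|].
  fext p. pext. apply sober_of_prox_below, Hv.
Qed.

End ProximityToSober.

Lemma sober_of_prox_id (M : MTAlg) : sober_of_prox (@proxId M) = @lambdaS (atom_space M).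
Proof.
  fext p. fext W. pext. unfold sober_of_prox, lambdaS. split.
  - intros [u [Hu [-> Hp]]]. rewrite proxId_open in Hp by exact Hu. split; [exists u|]; auto.
  - intros [[u [Hu ->]] Hp]. exists u. rewrite proxId_open by exact Hu. auto.
Qed.

Lemma sober_of_prox_comp (A B C : MTAlg) (f : B -> A) (g : C -> B) :
  spatial B -> spatial C -> proximity f -> proximity g ->
  sober_of_prox (proxComp f g) = soberComp (sober_of_prox g) (sober_of_prox f).
Proof.
  intros HsB HsC Hf Hg. fext p. fext W. pext. unfold soberComp. split.
  - intros [u [Hu [-> Hp]]]. rewrite proxComp_open in Hp by assumption.
    exists (g u). split; [apply (prox_open Hg), Hu | split; [| exact Hp]].
    fext q. pext. apply sober_of_prox_below; assumption.
  - intros Hfg. destruct (sober_of_prox_inhabited HsB Hf Hfg) as [q [u [Hu [-> _]]]].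
    destruct Hfg as [v [_ [Ev Hp]]].
    assert (Evu : v = g u).
    { apply (below_inj HsB). rewrite <- Ev. fext q'. pext. apply sober_of_prox_below; assumption. }
    exists u. rewrite proxComp_open by assumption. subst v. auto.
Qed.

Lemma lambdaS_cpfilter (X : Space) (x : X) : cpfilter (lambdaS x).
Proof.
  unfold lambdaS. split; [| split; [| split; [| split]]].
  - intros U [HU _]. exact HU.
  - auto using open_full.
  - intros U V _ HV [_ Hx] HUV. auto.
  - intros U V [HU Hx] [HV Hy]. auto using open_meet.
  - intros F HF [_ [U [HU Hx]]]. exists U. auto.
Qed.

Section SpaceUnit.
Variable X : Space.

Definition spt (x : X) : atom_space (powerset_alg X) := exist _ (sing x) (sing_atom x).

Lemma spt_surj (q : atom_space (powerset_alg X)) : exists x, q = spt x.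
Proof.
  destruct (powerset_atom (proj2_sig q)) as [x E]. exists x. apply atom_eq. exact E.
Qed.

Lemma below_spt (A : powerset_alg X) x : below A (spt x) <-> A x.
Proof. split; [intros H; apply H; reflexivity | intros Hx y ->; exact Hx]. Qed.

Lemma open_below (U : powerset_alg X) : isOpen U -> @isOpen (atom_space (powerset_alg X)) (below U).
Proof. intros HU. exists U. split; [apply powerset_openM, HU | reflexivity]. Qed.

Lemma open_spt_preimage (W : atom_space (powerset_alg X) -> Prop) :
  isOpen W -> isOpen (fun x => W (spt x)).
Proof.
  intros [u [Hu ->]]. replace (fun x => below u (spt x)) with u.
  - apply powerset_openM, Hu.
  - fext x. pext. symmetry. apply below_spt.
Qed.

Definition atoms_to_points : rawSober (atom_space (powerset_alg X)) X :=
  fun q U => isOpen U /\ below (U : powerset_alg X) q.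

Definition points_to_atoms : rawSober X (atom_space (powerset_alg X)) :=
  fun x => lambdaS (spt x).

Lemma atoms_to_points_spt x : atoms_to_points (spt x) = lambdaS x.
Proof. fext U. pext. unfold atoms_to_points, lambdaS. rewrite below_spt. reflexivity. Qed.

Lemma atoms_to_points_open (U : powerset_alg X) :
  isOpen U -> (fun q => atoms_to_points q U) = below U.
Proof. intros HU. fext q. pext. unfold atoms_to_points. tauto. Qed.

Lemma atoms_to_points_valid : soberMap atoms_to_points.
Proof.
  split.
  - intros q. destruct (spt_surj q) as [x ->]. rewrite atoms_to_points_spt. apply lambdaS_cpfilter.
  - intros U HU. rewrite atoms_to_points_open by exact HU. apply open_below, HU.
Qed.

Lemma points_to_atoms_valid : soberMap points_to_atoms.
Proof.
  split; [intros x; apply lambdaS_cpfilter|].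
  intros W HW. unfold points_to_atoms, lambdaS.
  replace (fun x => isOpen W /\ W (spt x)) with (fun x => W (spt x)) by (fext x; pext; tauto).
  apply open_spt_preimage, HW.
Qed.

Lemma points_to_atoms_to_points :
  soberComp points_to_atoms atoms_to_points = @lambdaS (atom_space (powerset_alg X)).
Proof.
  fext q. destruct (spt_surj q) as [x ->]. unfold soberComp. rewrite atoms_to_points_spt.
  fext W. pext. split; [intros [_ Hx]; exact Hx|].
  intros HW. split; [| exact HW]. apply points_to_atoms_valid, HW.
Qed.

Lemma atoms_to_points_to_atoms : soberComp atoms_to_points points_to_atoms = @lambdaS X.
Proof.
  fext x. fext U. pext. unfold soberComp, points_to_atoms.
  change (lambdaS (spt x) (fun q => atoms_to_points q U))
    with (isOpen (fun q => atoms_to_points q U) /\ atoms_to_points (spt x) U).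
  rewrite atoms_to_points_spt. split; [intros [_ Hx]; exact Hx|].
  intros HU. split; [apply atoms_to_points_valid, HU | exact HU].
Qed.

End SpaceUnit.

Lemma atoms_to_points_natural (X Y : Space) (f : rawSober X Y) : soberMap f ->
  soberComp f (@atoms_to_points X) =
  soberComp (@atoms_to_points Y) (sober_of_prox (prox_of_sober f)).
Proof.
  intros Hf. fext q. destruct (spt_surj q) as [x ->]. fext U. pext. unfold soberComp.
  rewrite atoms_to_points_spt.
  assert (Hpf := prox_of_sober_prox Hf).
  assert (Hsober : forall U : powerset_alg Y, isOpen U ->
    (sober_of_prox (prox_of_sober f) (spt x) (fun q => @atoms_to_points Y q U) <-> f x U)).
  { intros V HV. assert (HVo : openM V) by (apply powerset_openM, HV).
    rewrite (atoms_to_points_open HV), (sober_of_prox_below _ (@powerset_spatial Y) _ HVo).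
    rewrite (prox_of_sober_open Hf HV). exact (below_spt _ x). }
  split.
  - intros [_ HxU]. apply Hsober; [exact (cp_open (proj1 Hf x) HxU) | exact HxU].
  - intros H. destruct (sober_of_prox_inhabited (@powerset_spatial Y) Hpf H) as [q [HU _]].
    split; [apply (proj2 Hf), HU | apply Hsober; assumption].
Qed.

Section AlgebraUnit.
Variable M : MTAlg.

Definition atoms_join (A : powerset_alg (atom_space M)) : M :=
  msup (fun m => exists q, A q /\ m = proj1_sig q).

Lemma below_atoms_join A : below (atoms_join A) = A.
Proof.
  fext q. pext. unfold atoms_join. rewrite below_sup. split.
  - intros [m [[q' [Hq' ->]] Hqq']].
    replace q with q'; [exact Hq'|]. symmetry.
    apply atom_eq, atom_le_eq; [apply proj2_sig | apply proj2_sig | exact Hqq'].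
  - intros Hq. exists (proj1_sig q). split; [exists q; auto | apply mle_refl].
Qed.

Lemma below_atoms_join_id : proxComp (M3 := powerset_alg (atom_space M)) (@below M) atoms_join =
  @proxId (powerset_alg (atom_space M)).
Proof. apply proxComp_idE. intros A _. apply below_atoms_join. Qed.

Hypothesis Hsp : spatial M.
Hypothesis HTD : TD_alg M.

Lemma atoms_join_below a : atoms_join (below a) = a.
Proof. apply (below_inj Hsp), below_atoms_join. Qed.

Lemma below_prox : @proximity M (powerset_alg (atom_space M)) (@below M).
Proof.
  apply proximity_of_complete_hom; [exact HTD | | | |].
  - intros u Hu. apply powerset_openM. exists u. auto.
  - rewrite below_top, powerset_top. reflexivity.
  - apply below_meet.
  - intros S. fext q. pext. rewrite below_sup. split.
    + intros [a [Ha Hq]]. exists (below a). eauto.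
    + intros [B [[a [Ha ->]] Hq]]. eauto.
Qed.

Lemma atoms_join_prox : proximity atoms_join.
Proof.
  apply proximity_of_complete_hom; [apply powerset_TD, atom_space_TD, HTD | | | |].
  - intros A HA. apply powerset_openM in HA. destruct HA as [u [Hu ->]].
    rewrite atoms_join_below. exact Hu.
  - rewrite powerset_top, <- (atoms_join_below (mtop M)), below_top. reflexivity.
  - intros A B. apply (below_inj Hsp). rewrite below_meet, !below_atoms_join. reflexivity.
  - intros S. apply (below_inj Hsp). rewrite below_atoms_join. fext q. pext.
    rewrite below_sup. split.
    + intros [A [HA Hq]]. exists (atoms_join A). rewrite below_atoms_join. eauto.
    + intros [m [[A [HA ->]] Hq]]. rewrite below_atoms_join in Hq. exists A. auto.
Qed.

Lemma atoms_join_below_id :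
  proxComp (M2 := powerset_alg (atom_space M)) atoms_join (@below M) = @proxId M.
Proof. apply proxComp_idE. intros a _. apply atoms_join_below. Qed.

End AlgebraUnit.

Lemma below_natural (M N : MTAlg) (h : N -> M) : spatial N -> proximity h ->
  proxComp (M3 := powerset_alg (atom_space M)) (@below M) h =
  proxComp (M2 := powerset_alg (atom_space N)) (prox_of_sober (sober_of_prox h)) (@below N).
Proof.
  intros HsN Hh. apply proxComp_ext. intros x [c [d ->]].
  assert (Hopen : forall u : N, openM u -> @isOpen (atom_space N) (below u))
    by (intros u Hu; exists u; auto).
  replace (below (mmeet (mbox c) (mdia d)))
    with (fun q => below (mbox c) q /\ ~ below (mbox (mneg d)) q)
    by (rewrite below_meet; fext q; pext; unfold mdia; rewrite below_mneg; reflexivity).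
  rewrite prox_of_sober_diff by auto using sober_of_prox_valid, openM_box.
  rewrite (prox_meet Hh), (prox_mdia Hh), below_meet.
  fext p. pext. rewrite !sober_of_prox_below by auto using openM_box.
  rewrite below_mneg. reflexivity.
Qed.

Definition powerset_obj (X : Ob TDTopS) : Ob (opCat STDMTP) :=
  exist _ (powerset_alg (proj1_sig X)) (conj (@powerset_spatial _) (powerset_TD (proj2_sig X))).

Definition atom_obj (M : Ob (opCat STDMTP)) : Ob TDTopS :=
  exist _ (atom_space (proj1_sig M)) (atom_space_TD (proj2 (proj2_sig M))).

Definition powerset_functor : Functor TDTopS (opCat STDMTP).
Proof.
  refine {| Fo := powerset_obj; Fh := fun X Y (f : Hm TDTopS X Y) => prox_of_sober f |}.
  - intros X Y f Hf. exact (prox_of_sober_prox Hf).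
  - intros X. apply prox_of_sober_lambda.
  - intros X Y Z f g Hf Hg. apply prox_of_sober_comp; assumption.
Defined.

Definition atom_functor : Functor (opCat STDMTP) TDTopS.
Proof.
  refine {| Fo := atom_obj; Fh := fun M N (h : Hm (opCat STDMTP) M N) => sober_of_prox h |}.
  - intros M N h Hh. exact (sober_of_prox_valid (proj1 (proj2_sig N)) Hh).
  - intros M. apply sober_of_prox_id.
  - intros M N K f g Hf Hg.
    apply sober_of_prox_comp; [apply (proj2_sig N) | apply (proj2_sig K) | assumption ..].
Defined.

Lemma space_unit_natiso :
  natiso (fun X => Fo atom_functor (Fo powerset_functor X))
         (fun X Y f => Fh atom_functor (Fh powerset_functor f))
         (fun X => X) (fun X Y f => f).
Proof.
  exists (fun X => @atoms_to_points (proj1_sig X)), (fun X => @points_to_atoms (proj1_sig X)).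
  split.
  - intros X. split; [apply atoms_to_points_valid | split; [apply points_to_atoms_valid|]].
    split; [apply points_to_atoms_to_points | apply atoms_to_points_to_atoms].
  - intros X Y f Hf. apply atoms_to_points_natural, Hf.
Qed.

Lemma alg_unit_natiso :
  natiso (fun M => Fo powerset_functor (Fo atom_functor M))
         (fun M N h => Fh powerset_functor (Fh atom_functor h))
         (fun M => M) (fun M N h => h).
Proof.
  exists (fun M => @below (proj1_sig M)), (fun M => @atoms_join (proj1_sig M)).
  split.
  - intros [M [Hsp HTD]].
    split; [apply below_prox, HTD | split; [apply atoms_join_prox; assumption|]].
    split; [apply below_atoms_join_id | apply atoms_join_below_id, Hsp].
  - intros M N h Hh. apply below_natural; [apply (proj2_sig N) | exact Hh].
Qed.

Theorem corollary6p17 : CatEquivalent TDTopS (opCat STDMTP).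
Proof.
  exists powerset_functor, atom_functor.
  split; [exact space_unit_natiso | exact alg_unit_natiso].
Qed.
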